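(* Consider the planar $n$-body problem ($n\ge3$) with masses $m=(m_1,\dots,m_n)$ as in the context, and let $q_{m,e}$ be the elliptic Euler–Moulton solution with eccentricity $e\in[0,1)$: $q_i(t)=r(t)R(\theta(t))a_i$, $p_i=m_i\dot q_i$, where $r(t)=p/(1+e\cos\theta(t))$ is a Kepler ellipse with true anomaly $\theta(t)$. In the symplectic coordinates $(\bar Z,\bar W_1,\dots,\bar W_{n-2},\bar z,\bar w_1,\dots,\bar w_{n-2})$ with independent variable $\theta$ described in the context (center of mass fixed at the origin), the linearized Hamiltonian system at $q_{m,e}$ splits into $n-1$ mutually decoupled $4$-dimensional linear Hamiltonian systems: one in the variables $(\bar Z,\bar z)$ with quadratic Hamiltonian $$\tfrac12|\bar Z|^2+\bar z\cdot J\bar Z+\tfrac12\bar z^T\begin{pmatrix}-\frac{2-e\cos\theta}{1+e\cos\theta}&0\\0&1\end{pmatrix}\bar z,$$ which is the linearized system of the Kepler $2$-body problem at the Kepler elliptic orbit, and for each $1\le i\le n-2$ one in the variables $(\bar W_i,\bar w_i)$ with quadratic Hamiltonian $$\tfrac12|\bar W_i|^2+\bar w_i\cdot J\bar W_i+\tfrac12\bar w_i^T\begin{pmatrix}-\frac{2\beta_i+2-e\cos\theta}{1+e\cos\theta}&0\\0&\frac{\beta_i+1+e\cos\theta}{1+e\cos\theta}\end{pmatrix}\bar w_i,$$ which is the essential part of the linearized Hamiltonian system at an elliptic Euler collinear solution of the $3$-body problem with eccentricity $e$ and mass parameter $\beta_i$, where $\beta_i=-\lambda_{i+2}/\mu\ge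 0$.
   Context: Setup: $m_1,\dots,m_n>0$, $\sum m_i=1$, $\tilde M=\mathrm{diag}(m_1,\dots,m_n)$; $a_i=(a_{ix},0)^T$, $a_{1x}<\dots<a_{nx}$, is the collinear central configuration with $\sum m_ia_{ix}=0$, $\sum m_ia_{ix}^2=1$, $\sum_{j\ne i}m_j(a_{jx}-a_{ix})/|a_{jx}-a_{ix}|^3=\mu a_{ix}$, $\mu=\sum_{i<j}m_im_j/|a_{ix}-a_{jx}|$. $B_{ij}=m_im_j/|a_{ix}-a_{jx}|^3$ ($i\neq j$), $B_{ii}=-\sum_{j\ne i}B_{ij}$, $D=\mu I_n+\tilde M^{-1}B$ with eigenvalues $\lambda_1=\mu>\lambda_2=0\ge\lambda_3\ge\dots\ge\lambda_n$; $\beta_i=-\lambda_{i+2}/\mu$. Choose eigenvectors $v_k=(b_{1k},\dots,b_{nk})^T$ of $D$ for $\lambda_k$ ($3\le k\le n$) such that, with $v_1=(1,\dots,1)^T$, $v_2=(a_{1x},\dots,a_{nx})^T$, $v_i^T\tilde Mv_j=\delta_{ij}$. $J=\begin{pmatrix}0&-1\\1&0\end{pmatrix}$, $R(\theta)=\begin{pmatrix}\cos\theta&-\sin\theta\\ \sin\theta&\cos\theta\end{pmatrix}$. Coordinates: $q_i=a_{ix}z+\sum_{k=3}^nb_{ik}w_{k-2}$, $p_i=m_i(a_{ix}Z+\sum_{k=3}^nb_{ik}W_{k-2})$ ($z,w_l,Z,W_l\in\mathbb{R}^2$, center of mass and total momentum zero). With $p>0$, $\sigma=(\mu p)^{1/4}$,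 $r(t)=p/(1+e\cos\theta(t))$, $r^2\dot\theta=\sigma^2$, the barred coordinates are defined by $x=\frac{r}{\sigma}R(\theta)\bar x$, $X=R(\theta)\big(\frac{\sigma}{r}\bar X+\frac{\dot r}{\sigma}\bar x\big)$ for each pair $(x,X)\in\{(z,Z),(w_l,W_l)\}$, and $\theta$ is used as independent variable. Hamilton's equations: positions' derivative $=\partial H/\partial(\text{momentum})$, momenta's derivative $=-\partial H/\partial(\text{position})$. *)

From Stdlib Require Import Reals Lra Lia List Arith.
Open Scope R_scope.

Definition vec2 : Type := (R * R)%type.
Definition vzero : vec2 := (0, 0).
Definition vadd (u v : vec2) : vec2 := (fst u + fst v, snd u + snd v).
Definition vsub (u v : vec2) : vec2 := (fst u - fst v, snd u - snd v).
Definition vscal (c : R) (u : vec2) : vec2 := (c * fst u, c * snd u).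
Definition vopp (u : vec2) : vec2 := (- fst u, - snd u).
Definition dot (u v : vec2) : R := fst u * fst v + snd u * snd v.
Definition vnorm (u : vec2) : R := sqrt (dot u u).
(** J = [[0,-1],[1,0]] acting on column vectors *)
Definition Jmul (u : vec2) : vec2 := (- snd u, fst u).
Definition rot (th : R) (u : vec2) : vec2 :=
  (cos th * fst u - sin th * snd u, sin th * fst u + cos th * snd u).

(** * Finite sums over the index range lo..hi (inclusive; empty if hi < lo) *)
Definition rsum (lo hi : nat) (f : nat -> R) : R :=
  fold_right Rplus 0 (map f (seq lo (S hi - lo))).
Definition vsum (lo hi : nat) (f : nat -> vec2) : vec2 :=
  fold_right vadd vzero (map f (seq lo (S hi - lo))).

Definition has_vderiv (f : R -> vec2) (t : R) (g : vec2) : Prop :=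
  derivable_pt_lim (fun s => fst (f s)) t (fst g) /\
  derivable_pt_lim (fun s => snd (f s)) t (snd g).

Definition is_grad2 (f : vec2 -> R) (v : vec2) (g : vec2) : Prop :=
  derivable_pt_lim (fun s => f (vadd v (s, 0))) 0 (fst g) /\
  derivable_pt_lim (fun s => f (vadd v (0, s))) 0 (snd g).

Definition HamSys (H : R -> vec2 -> vec2 -> R) (x X : R -> vec2) : Prop :=
  forall th : R, exists gX gx : vec2,
    is_grad2 (fun Y => H th (x th) Y) (X th) gX /\
    is_grad2 (fun y => H th y (X th)) (x th) gx /\
    has_vderiv x th gX /\ has_vderiv X th (vopp gx).

(** * The planar n-body problem (bodies indexed 1..n) *)
(** Newtonian force on body i: -dH/dq_i = dU/dq_i, where
    H = sum |p_i|^2/(2 m_i) - U,  U = sum_{i<j} m_i m_j / |q_i - q_j|. *)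
Definition force (n : nat) (m : nat -> R) (i : nat) (Q : nat -> vec2) : vec2 :=
  vsum 1 n (fun j => if Nat.eqb j i then vzero else
    vscal (m i * m j / (vnorm (vsub (Q j) (Q i))) ^ 3) (vsub (Q j) (Q i))).

(** Linearized Hamiltonian system of the n-body problem along a curve q(t):
    dq_i' = dp_i / m_i,  dp_i' = D(force_i)(q(t))[dq(t)]  (directional derivative). *)
Definition LinNBody (n : nat) (m : nat -> R) (q : nat -> R -> vec2)
    (dq dp : nat -> R -> vec2) : Prop :=
  forall (t : R) (i : nat), (1 <= i <= n)%nat ->
    has_vderiv (dq i) t (vscal (/ m i) (dp i t)) /\
    exists g : vec2,
      has_vderiv (fun s => force n m i (fun j => vadd (q j t) (vscal s (dq j t)))) 0 g /\
      has_vderiv (dp i) t g.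

Definition mu (n : nat) (m a : nat -> R) : R :=
  rsum 1 n (fun i => rsum (S i) n (fun j => m i * m j / Rabs (a i - a j))).

Definition Bmat (n : nat) (m a : nat -> R) (i j : nat) : R :=
  if Nat.eqb i j then
    - rsum 1 n (fun l => if Nat.eqb l i then 0 else m i * m l / Rabs (a i - a l) ^ 3)
  else m i * m j / Rabs (a i - a j) ^ 3.

Definition Dmat (n : nat) (m a : nat -> R) (i j : nat) : R :=
  (if Nat.eqb i j then mu n m a else 0) + Bmat n m a i j / m i.

Definition vvec (a : nat -> R) (b : nat -> nat -> R) (k i : nat) : R :=
  if Nat.eqb k 1 then 1 else if Nat.eqb k 2 then a i else b i k.

Definition rtheta (p e th : R) : R := p / (1 + e * cos th).
Definition sigmaK (n : nat) (m a : nat -> R) (p : R) : R := sqrt (sqrt (mu n m a * p)).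

Definition EMsol (a : nat -> R) (p e : R) (theta : R -> R) (i : nat) (t : R) : vec2 :=
  vscal (rtheta p e (theta t)) (rot (theta t) (a i, 0)).

Definition unbar_pos (sg p e : R) (theta : R -> R) (xb : R -> vec2) (t : R) : vec2 :=
  vscal (rtheta p e (theta t) / sg) (rot (theta t) (xb (theta t))).
Definition unbar_mom (sg p e : R) (theta rdot : R -> R) (xb Xb : R -> vec2) (t : R) : vec2 :=
  rot (theta t) (vadd (vscal (sg / rtheta p e (theta t)) (Xb (theta t)))
                      (vscal (rdot t / sg) (xb (theta t)))).

Definition pert_q (n : nat) (a : nat -> R) (b : nat -> nat -> R)
    (z : R -> vec2) (w : nat -> R -> vec2) (i : nat) (t : R) : vec2 :=
  vadd (vscal (a i) (z t)) (vsum 3 n (fun k => vscal (b i k) (w (k - 2)%nat t))).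
Definition pert_p (n : nat) (m a : nat -> R) (b : nat -> nat -> R)
    (Z : R -> vec2) (W : nat -> R -> vec2) (i : nat) (t : R) : vec2 :=
  vscal (m i) (vadd (vscal (a i) (Z t)) (vsum 3 n (fun k => vscal (b i k) (W (k - 2)%nat t)))).

Definition quadH (k1 k2 : R) (xb Xb : vec2) : R :=
  / 2 * dot Xb Xb + dot xb (Jmul Xb) + / 2 * (k1 * fst xb ^ 2 + k2 * snd xb ^ 2).

Definition H_kepler (e : R) (th : R) (zb Zb : vec2) : R :=
  quadH (- ((2 - e * cos th) / (1 + e * cos th))) 1 zb Zb.

Definition H_euler (beta e : R) (th : R) (wb Wb : vec2) : R :=
  quadH (- ((2 * beta + 2 - e * cos th) / (1 + e * cos th)))
        ((beta + 1 + e * cos th) / (1 + e * cos th)) wb Wb.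

(** Along the homographic motion [q_i = r R(theta) a_i] the linearized force on body [i] is
    [r^-3 P_theta (sum_j B_ij dq_j)], where [P_theta v = v - 3 (u.v) u] and [u] is the radial
    direction.  Expanding the perturbation in the [M]-orthonormal eigenbasis [v_2, ..., v_n] of
    [M^-1 B] therefore decouples the linearized equations: the coefficient [y_k] of [v_k] obeys
    [y_k'' = nu_k r^-3 P_theta y_k], where [nu_k] is the eigenvalue, [-mu] for [v_2] and
    [lambda_k - mu] otherwise.  Passing to the frame that rotates and pulsates with the Kepler
    ellipse, with the true anomaly as time (it is a valid clock, since
    [theta' >= sigma^2 (1-e)^2 / p^2 > 0]), turns each such equation into Hamilton's equations of
    a quadratic Hamiltonian that depends only on [-nu_k / mu]: Kepler's for [k = 2] and Euler's
    with [beta = -lambda_k / mu] for [k >= 3]. *)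

From Stdlib Require Import Reals Lra Lia List Arith.
From Stdlib Require Import FunctionalExtensionality Ranalysis5 ClassicalEpsilon.
From Coquelicot Require Import Coquelicot.
Open Scope R_scope.

Lemma vec_eq (u v : vec2) : fst u = fst v -> snd u = snd v -> u = v.
Proof. destruct u, v; simpl; intros; subst; reflexivity. Qed.

Ltac vec_components :=
  apply vec_eq; unfold vadd, vscal, vsub, vopp, vzero, rot, Jmul, dot; simpl.

Lemma vscal_vscal c d v : vscal c (vscal d v) = vscal (c * d) v.
Proof. vec_components; ring. Qed.

Lemma rsum_ext lo hi f g :
  (forall i, (lo <= i <= hi)%nat -> f i = g i) -> rsum lo hi f = rsum lo hi g.
Proof.
  intros H; unfold rsum; f_equal; apply map_ext_in.
  intros i Hi; apply in_seq in Hi; apply H; lia.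
Qed.

Lemma vsum_ext lo hi f g :
  (forall i, (lo <= i <= hi)%nat -> f i = g i) -> vsum lo hi f = vsum lo hi g.
Proof.
  intros H; unfold vsum; f_equal; apply map_ext_in.
  intros i Hi; apply in_seq in Hi; apply H; lia.
Qed.

Lemma vsum_fst lo hi f : fst (vsum lo hi f) = rsum lo hi (fun i => fst (f i)).
Proof. unfold vsum, rsum; induction (seq lo (S hi - lo)); simpl; auto; now rewrite IHl. Qed.

Lemma vsum_snd lo hi f : snd (vsum lo hi f) = rsum lo hi (fun i => snd (f i)).
Proof. unfold vsum, rsum; induction (seq lo (S hi - lo)); simpl; auto; now rewrite IHl. Qed.

Lemma rsum_add lo hi f g :
  rsum lo hi (fun i => f i + g i) = rsum lo hi f + rsum lo hi g.
Proof. unfold rsum; induction (seq lo (S hi - lo)); simpl; [ring | rewrite IHl; ring]. Qed.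

Lemma rsum_scal lo hi c f : rsum lo hi (fun i => c * f i) = c * rsum lo hi f.
Proof. unfold rsum; induction (seq lo (S hi - lo)); simpl; [ring | rewrite IHl; ring]. Qed.

Lemma rsum_zero lo hi : rsum lo hi (fun _ => 0) = 0.
Proof. unfold rsum; induction (seq lo (S hi - lo)); simpl; [ring | rewrite IHl; ring]. Qed.

Lemma rsum_swap lo hi lo' hi' (F : nat -> nat -> R) :
  rsum lo hi (fun i => rsum lo' hi' (F i))
  = rsum lo' hi' (fun k => rsum lo hi (fun i => F i k)).
Proof.
  assert (Hl : forall l, fold_right Rplus 0 (map (fun i => rsum lo' hi' (F i)) l)
    = rsum lo' hi' (fun k => fold_right Rplus 0 (map (fun i => F i k) l))).
  { induction l; simpl; [symmetry; apply rsum_zero | rewrite IHl, <- rsum_add; reflexivity]. }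
  apply Hl.
Qed.

Lemma rsum_delta lo hi i x :
  (lo <= i <= hi)%nat -> rsum lo hi (fun j => if Nat.eqb j i then x else 0) = x.
Proof.
  intros Hi; unfold rsum.
  assert (Hin : In i (seq lo (S hi - lo))) by (apply in_seq; lia).
  pose proof (seq_NoDup (S hi - lo) lo) as Hnd.
  induction (seq lo (S hi - lo)) as [|j l IHl]; [destruct Hin|].
  inversion Hnd; subst; simpl.
  destruct (Nat.eqb_spec j i) as [->|Hji].
  - replace (fold_right Rplus 0 (map (fun j => if Nat.eqb j i then x else 0) l)) with 0.
    + ring.
    + clear - H1; induction l as [|k l IHl]; simpl; auto.
      destruct (Nat.eqb_spec k i); [subst; now destruct H1; left|].
      rewrite <- IHl; [ring | intro; apply H1; now right].
  - destruct Hin as [|Hin]; [congruence|]; rewrite IHl; auto; ring.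
Qed.

Lemma rsum_split lo hi i f : (lo <= i <= hi)%nat ->
  rsum lo hi f = f i + rsum lo hi (fun j => if Nat.eqb j i then 0 else f j).
Proof.
  intros Hi; rewrite <- (rsum_delta lo hi i (f i)) by exact Hi.
  rewrite <- rsum_add; apply rsum_ext; intros j _.
  destruct (Nat.eqb_spec j i); subst; ring.
Qed.

Lemma rsum_first lo hi f : (lo <= hi)%nat -> rsum lo hi f = f lo + rsum (S lo) hi f.
Proof. intros; unfold rsum; replace (S hi - lo)%nat with (S (S hi - S lo)) by lia; reflexivity. Qed.

Lemma vsum_first lo hi f : (lo <= hi)%nat -> vsum lo hi f = vadd (f lo) (vsum (S lo) hi f).
Proof. intros; unfold vsum; replace (S hi - lo)%nat with (S (S hi - S lo)) by lia; reflexivity. Qed.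

Lemma rsum_nonneg lo hi f :
  (forall i, (lo <= i <= hi)%nat -> 0 <= f i) -> 0 <= rsum lo hi f.
Proof.
  intros H; unfold rsum.
  assert (H' : forall i, In i (seq lo (S hi - lo)) -> 0 <= f i)
    by (intros i Hi; apply in_seq in Hi; apply H; lia).
  clear H; induction (seq lo (S hi - lo)) as [|j l IHl]; simpl; [lra|].
  pose proof (H' j (or_introl eq_refl)).
  assert (0 <= fold_right Rplus 0 (map f l)) by (apply IHl; intros; apply H'; now right).
  lra.
Qed.

Lemma rsum_zero_row_sum lo hi i (B x : nat -> R) : (lo <= i <= hi)%nat ->
  B i = - rsum lo hi (fun j => if Nat.eqb j i then 0 else B j) ->
  rsum lo hi (fun j => B j * x j)
  = rsum lo hi (fun j => if Nat.eqb j i then 0 else B j * (x j - x i)).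
Proof.
  intros Hi HB; rewrite (rsum_split lo hi i) by exact Hi.
  rewrite (rsum_ext lo hi (fun j => if Nat.eqb j i then 0 else B j * (x j - x i))
             (fun j => (if Nat.eqb j i then 0 else B j * x j)
                       + - x i * (if Nat.eqb j i then 0 else B j)))
    by (intros j _; destruct (Nat.eqb j i); ring).
  rewrite rsum_add, rsum_scal, HB; ring.
Qed.

Lemma vsum_scal lo hi c f : vsum lo hi (fun i => vscal c (f i)) = vscal c (vsum lo hi f).
Proof. apply vec_eq; simpl; rewrite ?vsum_fst, ?vsum_snd; apply rsum_scal. Qed.

Lemma vsum_scal_const lo hi c v :
  vsum lo hi (fun i => vscal (c i) v) = vscal (rsum lo hi c) v.
Proof.
  apply vec_eq; simpl; rewrite ?vsum_fst, ?vsum_snd; simpl;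
    rewrite Rmult_comm, <- rsum_scal; apply rsum_ext; intros; ring.
Qed.

Lemma vsum_swap lo hi lo' hi' (F : nat -> nat -> vec2) :
  vsum lo hi (fun i => vsum lo' hi' (F i))
  = vsum lo' hi' (fun k => vsum lo hi (fun i => F i k)).
Proof.
  apply vec_eq; rewrite ?vsum_fst, ?vsum_snd;
    [ rewrite (rsum_ext lo hi _ (fun i => rsum lo' hi' (fun k => fst (F i k))))
    | rewrite (rsum_ext lo hi _ (fun i => rsum lo' hi' (fun k => snd (F i k)))) ];
    try (intros; apply vsum_fst || apply vsum_snd);
    rewrite rsum_swap; apply rsum_ext; intros;
    symmetry; apply vsum_fst || apply vsum_snd.
Qed.

Lemma vsum_delta lo hi i x :
  (lo <= i <= hi)%nat -> vsum lo hi (fun j => if Nat.eqb j i then x else vzero) = x.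
Proof.
  intros Hi; apply vec_eq; rewrite ?vsum_fst, ?vsum_snd;
    rewrite <- (rsum_delta lo hi i) by exact Hi; apply rsum_ext; intros j _;
    destruct (Nat.eqb j i); reflexivity.
Qed.

Lemma vsum_linear (L : vec2 -> vec2) lo hi f :
  (forall u v, L (vadd u v) = vadd (L u) (L v)) -> L vzero = vzero ->
  L (vsum lo hi f) = vsum lo hi (fun i => L (f i)).
Proof.
  intros Hadd H0; unfold vsum; induction (seq lo (S hi - lo)); simpl; auto.
  now rewrite Hadd, IHl.
Qed.

Lemma vsum_zero_row_sum lo hi i (B : nat -> R) (x : nat -> vec2) : (lo <= i <= hi)%nat ->
  B i = - rsum lo hi (fun j => if Nat.eqb j i then 0 else B j) ->
  vsum lo hi (fun j => vscal (B j) (x j))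
  = vsum lo hi (fun j => if Nat.eqb j i then vzero else vscal (B j) (vsub (x j) (x i))).
Proof.
  intros Hi HB; apply vec_eq; rewrite ?vsum_fst, ?vsum_snd; simpl;
    [ rewrite (rsum_zero_row_sum lo hi i B (fun j => fst (x j)) Hi HB)
    | rewrite (rsum_zero_row_sum lo hi i B (fun j => snd (x j)) Hi HB) ];
    apply rsum_ext; intros j _; destruct (Nat.eqb j i); reflexivity.
Qed.

Lemma deriv_ext f g t l :
  (forall s, f s = g s) -> derivable_pt_lim f t l -> derivable_pt_lim g t l.
Proof. intros E; replace g with f; auto; now apply functional_extensionality. Qed.

Lemma deriv_eq f t l l' : derivable_pt_lim f t l -> l = l' -> derivable_pt_lim f t l'.
Proof. now intros ? <-. Qed.

Lemma deriv_mult f g t l l' : derivable_pt_lim f t l -> derivable_pt_lim g t l' ->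
  derivable_pt_lim (fun s => f s * g s) t (l * g t + f t * l').
Proof. exact (derivable_pt_lim_mult f g t l l'). Qed.

Lemma deriv_plus f g t l l' : derivable_pt_lim f t l -> derivable_pt_lim g t l' ->
  derivable_pt_lim (fun s => f s + g s) t (l + l').
Proof. exact (derivable_pt_lim_plus f g t l l'). Qed.

Lemma deriv_minus f g t l l' : derivable_pt_lim f t l -> derivable_pt_lim g t l' ->
  derivable_pt_lim (fun s => f s - g s) t (l - l').
Proof. exact (derivable_pt_lim_minus f g t l l'). Qed.

Lemma deriv_opp f t l : derivable_pt_lim f t l -> derivable_pt_lim (fun s => - f s) t (- l).
Proof. exact (derivable_pt_lim_opp f t l). Qed.

Lemma deriv_scal c f t l : derivable_pt_lim f t l -> derivable_pt_lim (fun s => c * f s) t (c * l).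
Proof. exact (derivable_pt_lim_scal f c t l). Qed.

Lemma deriv_comp f g t l l' : derivable_pt_lim g t l -> derivable_pt_lim f (g t) l' ->
  derivable_pt_lim (fun s => f (g s)) t (l' * l).
Proof. exact (derivable_pt_lim_comp g f t l l'). Qed.

Lemma deriv_cos g t l : derivable_pt_lim g t l ->
  derivable_pt_lim (fun s => cos (g s)) t (- sin (g t) * l).
Proof. intros; apply (deriv_comp cos g); auto; apply derivable_pt_lim_cos. Qed.

Lemma deriv_sin g t l : derivable_pt_lim g t l ->
  derivable_pt_lim (fun s => sin (g s)) t (cos (g t) * l).
Proof. intros; apply (deriv_comp sin g); auto; apply derivable_pt_lim_sin. Qed.

Lemma deriv_inv f t l : derivable_pt_lim f t l -> f t <> 0 ->
  derivable_pt_lim (fun s => / f s) t (- l / f t ^ 2).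
Proof.
  intros Hf Hnz.
  pose proof (derivable_pt_lim_div (fun _ => 1) f t 0 l (derivable_pt_lim_const 1 t) Hf Hnz) as H.
  eapply deriv_ext; [|eapply deriv_eq; [exact H|]].
  - intros; unfold div_fct; simpl; unfold Rdiv; ring.
  - unfold Rsqr; simpl; field; auto.
Qed.

Lemma vderiv_unique f t g g' : has_vderiv f t g -> has_vderiv f t g' -> g = g'.
Proof. intros [] []; apply vec_eq; eapply uniqueness_limite; eauto. Qed.

Lemma vderiv_eq f t g g' : has_vderiv f t g -> g = g' -> has_vderiv f t g'.
Proof. now intros ? <-. Qed.

Lemma vderiv_ext f g t d : (forall s, f s = g s) -> has_vderiv f t d -> has_vderiv g t d.
Proof. intros E; replace g with f; auto; now apply functional_extensionality. Qed.

Lemma vderiv_add f g t d d' : has_vderiv f t d -> has_vderiv g t d' ->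
  has_vderiv (fun s => vadd (f s) (g s)) t (vadd d d').
Proof. intros [] []; split; simpl; now apply deriv_plus. Qed.

Lemma vderiv_sub f g t d d' : has_vderiv f t d -> has_vderiv g t d' ->
  has_vderiv (fun s => vsub (f s) (g s)) t (vsub d d').
Proof. intros [] []; split; simpl; now apply deriv_minus. Qed.

Lemma vderiv_scal h f t l d : derivable_pt_lim h t l -> has_vderiv f t d ->
  has_vderiv (fun s => vscal (h s) (f s)) t (vadd (vscal l (f t)) (vscal (h t) d)).
Proof. intros Hh []; split; simpl; now apply deriv_mult. Qed.

Lemma vderiv_cscal c f t d : has_vderiv f t d ->
  has_vderiv (fun s => vscal c (f s)) t (vscal c d).
Proof. intros []; split; simpl; now apply deriv_scal. Qed.

Lemma vderiv_comp f g t l d : derivable_pt_lim g t l -> has_vderiv f (g t) d ->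
  has_vderiv (fun s => f (g s)) t (vscal l d).
Proof.
  intros Hg [H1 H2]; split; simpl; rewrite Rmult_comm;
    [apply (deriv_comp (fun y => fst (f y))) | apply (deriv_comp (fun y => snd (f y)))]; auto.
Qed.

Lemma vderiv_rot th f t l d : derivable_pt_lim th t l -> has_vderiv f t d ->
  has_vderiv (fun s => rot (th s) (f s)) t (rot (th t) (vadd d (vscal l (Jmul (f t))))).
Proof.
  intros Hth [H1 H2]; unfold rot; split; simpl; (eapply deriv_eq;
    [ first [apply deriv_minus | apply deriv_plus]; apply deriv_mult;
      first [apply deriv_cos | apply deriv_sin | idtac]; eauto
    | simpl; ring ]).
Qed.

Lemma vderiv_vsum lo hi (F : nat -> R -> vec2) G t :
  (forall j, (lo <= j <= hi)%nat -> has_vderiv (F j) t (G j)) ->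
  has_vderiv (fun s => vsum lo hi (fun j => F j s)) t (vsum lo hi G).
Proof.
  unfold vsum; intros H.
  assert (H' : forall j, In j (seq lo (S hi - lo)) -> has_vderiv (F j) t (G j))
    by (intros j Hj; apply in_seq in Hj; apply H; lia).
  clear H; induction (seq lo (S hi - lo)) as [|j l IHl]; simpl.
  - split; apply derivable_pt_lim_const.
  - apply (vderiv_add (F j) (fun s => fold_right vadd vzero (map (fun j => F j s) l)));
      auto with datatypes.
Qed.

Lemma cos_sin_sq th : cos th ^ 2 + sin th ^ 2 = 1.
Proof. pose proof (sin2_cos2 th); unfold Rsqr in *; simpl; lra. Qed.

Lemma rot_scal th c v : rot th (vscal c v) = vscal c (rot th v).
Proof. vec_components; ring. Qed.

Lemma rot_opp_rot th v : rot (- th) (rot th v) = v.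
Proof.
  pose proof (cos_sin_sq th); unfold rot; rewrite cos_neg, sin_neg; vec_components.
  - transitivity ((cos th ^ 2 + sin th ^ 2) * fst v); [ring | rewrite H; ring].
  - transitivity ((cos th ^ 2 + sin th ^ 2) * snd v); [ring | rewrite H; ring].
Qed.

Lemma rot_inj th u v : rot th u = rot th v -> u = v.
Proof. intros E; rewrite <- (rot_opp_rot th u), <- (rot_opp_rot th v), E; reflexivity. Qed.

Definition radial (th : R) : vec2 := (cos th, sin th).

(** [tidal u] is the derivative of [x / |x|^3] at the unit vector [u]. *)
Definition tidal (u v : vec2) : vec2 := vsub v (vscal (3 * dot u v) u).

Lemma tidal_add u v w : tidal u (vadd v w) = vadd (tidal u v) (tidal u w).
Proof. unfold tidal; vec_components; ring. Qed.

Lemma tidal_zero u : tidal u vzero = vzero.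
Proof. unfold tidal; vec_components; ring. Qed.

Lemma tidal_scal u c v : tidal u (vscal c v) = vscal c (tidal u v).
Proof. unfold tidal; vec_components; ring. Qed.

Lemma tidal_radial_rot th w : tidal (radial th) (rot th w) = rot th (-2 * fst w, snd w).
Proof.
  pose proof (cos_sin_sq th).
  assert (Hd : dot (radial th) (rot th w) = fst w).
  { unfold dot, radial, rot; simpl.
    transitivity ((cos th ^ 2 + sin th ^ 2) * fst w); [ring | rewrite H; ring]. }
  unfold tidal; rewrite Hd; vec_components; ring.
Qed.

Definition tidal_ode (nu : R) (r th : R -> R) (x X : R -> vec2) : Prop :=
  forall t, has_vderiv x t (X t) /\
            has_vderiv X t (vscal (nu / r t ^ 3) (tidal (radial (th t)) (x t))).

Lemma HamSys_ext H H' x X :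
  (forall th y Y, H th y Y = H' th y Y) -> HamSys H x X <-> HamSys H' x X.
Proof.
  intros E; replace H' with H; [tauto|].
  do 3 (apply functional_extensionality; intro); apply E.
Qed.

Lemma is_grad2_unique f v g g' : is_grad2 f v g -> is_grad2 f v g' -> g = g'.
Proof. intros [] []; apply vec_eq; eapply uniqueness_limite; eauto. Qed.

Definition quadH_vel (x X : vec2) : vec2 := (fst X + snd x, snd X - fst x).
Definition quadH_force (k1 k2 : R) (x X : vec2) : vec2 :=
  vopp (- snd X + k1 * fst x, fst X + k2 * snd x).

Lemma is_grad2_quadH k1 k2 x X :
  is_grad2 (fun Y => quadH k1 k2 x Y) X (quadH_vel x X) /\
  is_grad2 (fun y => quadH k1 k2 y X) x (vopp (quadH_force k1 k2 x X)).
Proof.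
  destruct x as [x1 x2], X as [X1 X2].
  unfold is_grad2, quadH, quadH_vel, quadH_force, dot, Jmul, vadd, vopp; simpl.
  repeat split; apply is_derive_Reals; auto_derive; auto; field.
Qed.

Lemma HamSys_quadH (K1 K2 : R -> R) x X :
  HamSys (fun th => quadH (K1 th) (K2 th)) x X <->
  forall th, has_vderiv x th (quadH_vel (x th) (X th)) /\
             has_vderiv X th (quadH_force (K1 th) (K2 th) (x th) (X th)).
Proof.
  unfold HamSys; split; intros Hs th;
    destruct (is_grad2_quadH (K1 th) (K2 th) (x th) (X th)) as [GX Gx].
  - destruct (Hs th) as (gX & gx & HX & Hx & Dx & DX).
    rewrite (is_grad2_unique _ _ _ _ HX GX) in Dx.
    rewrite (is_grad2_unique _ _ _ _ Hx Gx) in DX.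
    split; auto; eapply vderiv_eq; [exact DX | vec_components; ring].
  - destruct (Hs th) as [Dx DX]; exists (quadH_vel (x th) (X th)),
      (vopp (quadH_force (K1 th) (K2 th) (x th) (X th))).
    split; [exact GX | split; [exact Gx | split; [exact Dx |]]].
    eapply vderiv_eq; [exact DX | vec_components; ring].
Qed.

(** * Linearization of the Newtonian force *)

Lemma inverse_cube_vderiv C u d r0 : dot u u = 1 -> r0 <> 0 ->
  has_vderiv (fun s => vscal (C / vnorm (vadd (vscal r0 u) (vscal s d)) ^ 3)
                             (vadd (vscal r0 u) (vscal s d))) 0
    (vscal (C / Rabs r0 ^ 3) (tidal u d)).
Proof.
  destruct u as [u1 u2], d as [d1 d2]; intros Hu Hr.
  unfold has_vderiv, vnorm, tidal, vscal, vadd, vsub; unfold dot in *; simpl in *.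
  set (N := (r0 * u1 + 0 * d1) * (r0 * u1 + 0 * d1) + (r0 * u2 + 0 * d2) * (r0 * u2 + 0 * d2)).
  assert (HN : N = Rsqr r0)
    by (unfold N, Rsqr; transitivity (r0 * r0 * (u1 * u1 + u2 * u2)); [ring | rewrite Hu; ring]).
  assert (Hs : sqrt N = Rabs r0) by (rewrite HN; apply sqrt_Rsqr_abs).
  assert (Hpos : 0 < N) by (rewrite HN; now apply Rsqr_pos_lt).
  assert (Ha : Rabs r0 <> 0) by now apply Rabs_no_R0.
  split; apply is_derive_Reals; auto_derive; fold N; rewrite ?Hs; repeat split; auto;
    try (repeat apply Rmult_integral_contrapositive_currified; auto; lra).
  all: destruct (Rle_or_lt 0 r0);
    [rewrite Rabs_pos_eq in * by lra | rewrite Rabs_left in * by lra]; field; auto; lra.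
Qed.

Lemma Bmat_diag n m a i :
  Bmat n m a i i = - rsum 1 n (fun j => if Nat.eqb j i then 0 else Bmat n m a i j).
Proof.
  unfold Bmat at 1; rewrite Nat.eqb_refl; f_equal; apply rsum_ext; intros j _.
  destruct (Nat.eqb_spec j i); auto.
  unfold Bmat; destruct (Nat.eqb_spec i j); auto; congruence.
Qed.

Lemma force_vderiv n m a r th (dq : nat -> vec2) i :
  0 < r -> (1 <= i <= n)%nat ->
  (forall j, (1 <= j <= n)%nat -> j <> i -> a j <> a i) ->
  has_vderiv (fun s => force n m i (fun j => vadd (vscal r (rot th (a j, 0))) (vscal s (dq j)))) 0
    (vscal (/ r ^ 3) (tidal (radial th) (vsum 1 n (fun j => vscal (Bmat n m a i j) (dq j))))).
Proof.
  intros Hr Hi Ha.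
  set (L := fun v => vscal (/ r ^ 3) (tidal (radial th) v)).
  assert (Ladd : forall u v, L (vadd u v) = vadd (L u) (L v))
    by (intros; unfold L; rewrite tidal_add; vec_components; ring).
  assert (L0 : L vzero = vzero) by (unfold L; rewrite tidal_zero; vec_components; ring).
  change (has_vderiv (fun s => force n m i (fun j => vadd (vscal r (rot th (a j, 0))) (vscal s (dq j))))
            0 (L (vsum 1 n (fun j => vscal (Bmat n m a i j) (dq j))))).
  rewrite (vsum_zero_row_sum 1 n i) by (auto; apply Bmat_diag).
  rewrite vsum_linear by auto.
  unfold force; apply vderiv_vsum; intros j Hj.
  destruct (Nat.eqb_spec j i) as [->|Hji]; [rewrite L0; split; apply derivable_pt_lim_const|].
  set (r0 := r * (a j - a i)); set (d := vsub (dq j) (dq i)).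
  apply (vderiv_ext (fun s => vscal (m i * m j / vnorm (vadd (vscal r0 (radial th)) (vscal s d)) ^ 3)
                                     (vadd (vscal r0 (radial th)) (vscal s d)))).
  { intro s.
    replace (vsub (vadd (vscal r (rot th (a j, 0))) (vscal s (dq j)))
                  (vadd (vscal r (rot th (a i, 0))) (vscal s (dq i))))
      with (vadd (vscal r0 (radial th)) (vscal s d))
      by (unfold r0, d, radial; vec_components; ring).
    reflexivity. }
  assert (Hr0 : r0 <> 0)
    by (apply Rmult_integral_contrapositive_currified; [lra | specialize (Ha j Hj Hji); lra]).
  eapply vderiv_eq; [apply inverse_cube_vderiv; auto|].
  - unfold radial, dot; simpl; pose proof (cos_sin_sq th); simpl in *; lra.
  - unfold L, Bmat; destruct (Nat.eqb_spec i j); [congruence|].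
    assert (Hne : Rabs (a i - a j) <> 0) by (apply Rabs_no_R0; specialize (Ha j Hj Hji); lra).
    rewrite tidal_scal; unfold r0; rewrite Rabs_mult, (Rabs_pos_eq r), (Rabs_minus_sym (a j)) by lra.
    vec_components; field; lra.
Qed.

(** * Normal modes of the collinear configuration *)

(** The centre-of-mass mode [v_1] is left out. *)
Definition modal_sum (n : nat) (a : nat -> R) (b : nat -> nat -> R) (x : nat -> vec2) (i : nat)
  : vec2 := vsum 2 n (fun k => vscal (vvec a b k i) (x k)).

(** Eigenvalue of [M^-1 B] on [v_k]: [D = mu I + M^-1 B], and [v_2] lies in the kernel of [D]. *)
Definition mode_eig (n : nat) (m a lam : nat -> R) (k : nat) : R :=
  (if Nat.eqb k 2 then 0 else lam k) - mu n m a.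

Lemma vvec_ge3 a b k i : (3 <= k)%nat -> vvec a b k i = b i k.
Proof.
  intros; unfold vvec; destruct (Nat.eqb_spec k 1); [lia|].
  destruct (Nat.eqb_spec k 2); [lia | reflexivity].
Qed.

Lemma vsum_vscal_vsum lo hi lo' hi' (al : nat -> R) (be : nat -> nat -> R) (y : nat -> vec2) :
  vsum lo hi (fun i => vscal (al i) (vsum lo' hi' (fun k => vscal (be i k) (y k))))
  = vsum lo' hi' (fun k => vscal (rsum lo hi (fun i => al i * be i k)) (y k)).
Proof.
  transitivity (vsum lo hi (fun i => vsum lo' hi' (fun k => vscal (al i * be i k) (y k)))).
  { apply vsum_ext; intros; rewrite <- vsum_scal; apply vsum_ext; intros; apply vscal_vscal. }
  rewrite vsum_swap; apply vsum_ext; intros; apply vsum_scal_const.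
Qed.

Lemma tidal_modal_sum n a b u x i :
  tidal u (modal_sum n a b x i) = modal_sum n a b (fun k => tidal u (x k)) i.
Proof.
  unfold modal_sum; rewrite vsum_linear by (apply tidal_add || apply tidal_zero).
  apply vsum_ext; intros; apply tidal_scal.
Qed.

Section Modes.

Variables (n : nat) (m a : nat -> R) (b : nat -> nat -> R).
Hypothesis orthonormal : forall k l, (1 <= k <= n)%nat -> (1 <= l <= n)%nat ->
  rsum 1 n (fun i => vvec a b k i * m i * vvec a b l i) = if Nat.eqb k l then 1 else 0.

Lemma modal_coord k (x : nat -> vec2) : (2 <= k <= n)%nat ->
  vsum 1 n (fun i => vscal (m i * vvec a b k i) (modal_sum n a b x i)) = x k.
Proof.
  intros Hk; unfold modal_sum; rewrite vsum_vscal_vsum.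
  rewrite <- (vsum_delta 2 n k (x k)) by lia; apply vsum_ext; intros l Hl.
  rewrite (rsum_ext _ _ _ (fun i => vvec a b k i * m i * vvec a b l i)) by (intros; ring).
  rewrite orthonormal by lia.
  destruct (Nat.eqb_spec k l), (Nat.eqb_spec l k); try lia; subst; vec_components; ring.
Qed.

Lemma modal_vderiv k (x : nat -> R -> vec2) (X : nat -> vec2) t : (2 <= k <= n)%nat ->
  (forall i, (1 <= i <= n)%nat ->
     has_vderiv (fun s => modal_sum n a b (fun l => x l s) i) t (modal_sum n a b X i)) ->
  has_vderiv (x k) t (X k).
Proof.
  intros Hk Hx.
  apply (vderiv_ext (fun s => vsum 1 n (fun i => vscal (m i * vvec a b k i)
                                                   (modal_sum n a b (fun l => x l s) i)))).
  { intro s; now apply modal_coord. }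
  rewrite <- modal_coord by exact Hk.
  apply vderiv_vsum; intros i Hi; apply vderiv_cscal, Hx, Hi.
Qed.

Variable lam : nat -> R.
Hypothesis masses_pos : forall i, (1 <= i <= n)%nat -> 0 < m i.
Hypothesis central : forall i, (1 <= i <= n)%nat ->
  rsum 1 n (fun j => if Nat.eqb j i then 0 else m j * (a j - a i) / Rabs (a j - a i) ^ 3)
  = - mu n m a * a i.
Hypothesis eigen : forall k i, (3 <= k <= n)%nat -> (1 <= i <= n)%nat ->
  rsum 1 n (fun j => Dmat n m a i j * b j k) = lam k * b i k.

Lemma Bmat_mode i k : (1 <= i <= n)%nat -> (2 <= k <= n)%nat ->
  rsum 1 n (fun j => Bmat n m a i j * vvec a b k j) = m i * mode_eig n m a lam k * vvec a b k i.
Proof.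
  intros Hi Hk; pose proof (masses_pos i Hi) as Hmi; unfold mode_eig.
  destruct (Nat.eqb_spec k 2) as [->|Hk2]; cbn [vvec Nat.eqb].
  - rewrite (rsum_zero_row_sum 1 n i) by (auto; apply Bmat_diag).
    rewrite (rsum_ext _ _ _ (fun j => m i * (if Nat.eqb j i then 0
                                  else m j * (a j - a i) / Rabs (a j - a i) ^ 3))).
    + rewrite rsum_scal, central by exact Hi; ring.
    + intros j _; destruct (Nat.eqb_spec j i); [ring|].
      unfold Bmat; destruct (Nat.eqb_spec i j); [congruence|].
      rewrite (Rabs_minus_sym (a i)); unfold Rdiv; ring.
  - rewrite vvec_ge3 by lia.
    rewrite (rsum_ext _ _ _ (fun j => Bmat n m a i j * b j k)) by (intros; rewrite vvec_ge3 by lia; auto).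
    pose proof (eigen k i ltac:(lia) Hi) as E.
    rewrite (rsum_ext _ _ _ (fun j => (if Nat.eqb j i then mu n m a * b i k else 0)
                                        + / m i * (Bmat n m a i j * b j k))) in E.
    2: { intros j _; unfold Dmat; rewrite (Nat.eqb_sym i j).
         destruct (Nat.eqb_spec j i); subst; field; lra. }
    rewrite rsum_add, rsum_delta, rsum_scal in E by exact Hi.
    apply (Rmult_eq_reg_l (/ m i)); [|apply Rinv_neq_0_compat; lra].
    replace (/ m i * rsum 1 n (fun j => Bmat n m a i j * b j k))
      with (lam k * b i k - mu n m a * b i k) by lra.
    field; lra.
Qed.

Lemma Bmat_modal_sum i (y : nat -> vec2) : (1 <= i <= n)%nat ->
  vsum 1 n (fun j => vscal (Bmat n m a i j) (modal_sum n a b y j))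
  = vscal (m i) (modal_sum n a b (fun k => vscal (mode_eig n m a lam k) (y k)) i).
Proof.
  intros Hi; unfold modal_sum; rewrite vsum_vscal_vsum, <- vsum_scal.
  apply vsum_ext; intros k Hk; rewrite Bmat_mode by (auto; lia).
  rewrite !vscal_vscal; f_equal; ring.
Qed.

Lemma force_vderiv_modal (r th : R) (y : nat -> vec2) i :
  0 < r -> (1 <= i <= n)%nat -> (forall j, (1 <= j <= n)%nat -> j <> i -> a j <> a i) ->
  has_vderiv (fun s => force n m i
                 (fun j => vadd (vscal r (rot th (a j, 0))) (vscal s (modal_sum n a b y j)))) 0
    (vscal (m i) (modal_sum n a b
       (fun k => vscal (mode_eig n m a lam k / r ^ 3) (tidal (radial th) (y k))) i)).
Proof.
  intros Hr Hi Ha; eapply vderiv_eq; [apply force_vderiv; auto|].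
  rewrite Bmat_modal_sum, tidal_scal, tidal_modal_sum by exact Hi.
  unfold modal_sum; rewrite <- !vsum_scal; apply vsum_ext; intros k _.
  rewrite tidal_scal, !vscal_vscal; f_equal; unfold Rdiv; ring.
Qed.


Lemma LinNBody_modal (r th : R -> R) (y Y : nat -> R -> vec2) :
  (forall i j, (1 <= i <= n)%nat -> (1 <= j <= n)%nat -> j <> i -> a j <> a i) ->
  (forall t, 0 < r t) ->
  LinNBody n m (fun j t => vscal (r t) (rot (th t) (a j, 0)))
    (fun i t => modal_sum n a b (fun k => y k t) i)
    (fun i t => vscal (m i) (modal_sum n a b (fun k => Y k t) i))
  <-> forall k, (2 <= k <= n)%nat -> tidal_ode (mode_eig n m a lam k) r th (y k) (Y k).
Proof.
  intros Ha Hr.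
  set (Phi := fun t k => vscal (mode_eig n m a lam k / r t ^ 3) (tidal (radial (th t)) (y k t))).
  assert (Hforce : forall i t, (1 <= i <= n)%nat ->
    has_vderiv (fun s => force n m i (fun j => vadd (vscal (r t) (rot (th t) (a j, 0)))
                                           (vscal s (modal_sum n a b (fun k => y k t) j)))) 0
      (vscal (m i) (modal_sum n a b (Phi t) i)))
    by (intros; apply force_vderiv_modal; auto).
  assert (Hcancel : forall i v, (1 <= i <= n)%nat -> vscal (/ m i) (vscal (m i) v) = v)
    by (intros i v Hi; pose proof (masses_pos i Hi);
        rewrite vscal_vscal, Rinv_l by lra; vec_components; ring).
  split.
  - intros H k Hk t; split.
    + apply (modal_vderiv k y (fun l => Y l t)); auto; intros i Hi.
      destruct (H t i Hi) as [Hq _]; rewrite Hcancel in Hq; auto.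
    + apply (modal_vderiv k Y (Phi t)); auto; intros i Hi.
      destruct (H t i Hi) as [_ [g [Hg Hp]]].
      rewrite (vderiv_unique _ _ _ _ Hg (Hforce i t Hi)) in Hp.
      apply (vderiv_ext (fun s => vscal (/ m i) (vscal (m i) (modal_sum n a b (fun k => Y k s) i))));
        [intros; auto|].
      rewrite <- (Hcancel i (modal_sum n a b (Phi t) i)) by exact Hi.
      now apply vderiv_cscal.
  - intros H t i Hi; split.
    + rewrite Hcancel by exact Hi.
      apply vderiv_vsum; intros k Hk; apply vderiv_cscal, H; auto.
    + exists (vscal (m i) (modal_sum n a b (Phi t) i)); split; auto.
      apply vderiv_cscal, vderiv_vsum; intros k Hk; apply vderiv_cscal, H; auto.
Qed.

End Modes.

(** * Inverting the true anomaly *)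

Section IncreasingInverse.

Variables (th w : R -> R) (c0 : R).
Hypotheses (c0_pos : 0 < c0) (th_deriv : forall t, derivable_pt_lim th t (w t))
  (w_ge : forall t, c0 <= w t).

Let th_derivable : derivable th := fun t => exist _ (w t) (th_deriv t).

Lemma deriv_ge_growth a b : a < b -> th a + c0 * (b - a) <= th b.
Proof.
  intros Hab; destruct (MVT_cor1 th a b th_derivable Hab) as (c & E & _).
  change (derive_pt th c (th_derivable c)) with (w c) in E.
  pose proof (w_ge c); nra.
Qed.

Lemma deriv_ge_increasing a b : a < b -> th a < th b.
Proof. intros Hab; pose proof (deriv_ge_growth a b Hab); nra. Qed.

Lemma deriv_ge_surjective y : exists t, th t = y.
Proof.
  set (T := (Rabs (y - th 0) + 1) / c0).
  assert (HT : 0 < T) by (apply Rdiv_lt_0_compat; auto; pose proof (Rabs_pos (y - th 0)); lra).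
  assert (Hup : th 0 + (Rabs (y - th 0) + 1) <= th T).
  { pose proof (deriv_ge_growth 0 T HT).
    replace (c0 * (T - 0)) with (Rabs (y - th 0) + 1) in H by (unfold T; field; lra); auto. }
  assert (Hlo : th (- T) + (Rabs (y - th 0) + 1) <= th 0).
  { pose proof (deriv_ge_growth (- T) 0 ltac:(lra)).
    replace (c0 * (0 - - T)) with (Rabs (y - th 0) + 1) in H by (unfold T; field; lra); auto. }
  pose proof (RRle_abs (y - th 0)); pose proof (Rabs_maj2 (y - th 0)).
  destruct (IVT (fun t => th t - y) (- T) T) as (z & _ & Hz); try lra.
  - apply continuity_minus; [intro t; apply derivable_continuous_pt, th_derivable
                             | apply continuity_const; intros ? ?; auto].
  - exists z; lra.
Qed.

Lemma deriv_ge_inverse :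
  exists g : R -> R, (forall y, th (g y) = y) /\ (forall y, derivable_pt_lim g y (/ w (g y))).
Proof.
  exists (fun y => proj1_sig (constructive_indefinite_description _ (deriv_ge_surjective y))).
  set (g := fun y => proj1_sig (constructive_indefinite_description _ (deriv_ge_surjective y))).
  assert (Hg : forall y, th (g y) = y)
    by (intro y; exact (proj2_sig (constructive_indefinite_description _ (deriv_ge_surjective y)))).
  assert (Hmono : forall x y, x <= y -> g x <= g y).
  { intros x y Hxy; destruct (Rle_or_lt (g x) (g y)) as [|Hlt]; auto.
    apply deriv_ge_increasing in Hlt; rewrite !Hg in Hlt; lra. }
  split; [exact Hg|]; intro y.
  assert (Hgc : continuity_pt g y).
  { apply (continuity_pt_recip_interv th g (g y - 1) (g y + 1)); try lra.
    - intros; apply deriv_ge_increasing; lra.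
    - intros; unfold comp, id; apply Hg.
    - intros x H1 H2; split; [destruct (Rle_or_lt (g y - 1) (g x)) as [|Hlt]
                             | destruct (Rle_or_lt (g x) (g y + 1)) as [|Hlt]]; auto;
        apply deriv_ge_increasing in Hlt; rewrite Hg in Hlt; lra.
    - intros; apply derivable_continuous_pt, th_derivable.
    - rewrite <- (Hg y) at 2 3; split; apply deriv_ge_increasing; lra. }
  assert (Hbr : g (y - 1) <= g y <= g (y + 1)) by (split; apply Hmono; lra).
  pose proof (derivable_pt_lim_recip_interv th g (y - 1) (y + 1) y (fun a _ => th_derivable a)
                Hgc ltac:(lra) ltac:(lra) Hbr) as Hd.
  simpl in Hd; eapply deriv_eq; [apply Hd|].
  - intros; unfold comp, id; apply Hg.
  - pose proof (w_ge (g y)); lra.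
  - apply Rdiv_1_l.
Qed.

End IncreasingInverse.

Lemma vderiv_through_inverse (th g : R -> R) (x : R -> vec2) y l d :
  (forall y, th (g y) = y) -> derivable_pt_lim g y l ->
  has_vderiv (fun s => x (th s)) (g y) d -> has_vderiv x y (vscal l d).
Proof.
  intros Hg Hgd Hd; apply (vderiv_ext (fun y => x (th (g y)))); [intros s; cbv beta; now rewrite Hg|].
  now apply (vderiv_comp (fun s => x (th s)) g).
Qed.

(** * Barred coordinates *)

Lemma one_plus_ecos_pos e y : 0 <= e < 1 -> 0 < 1 + e * cos y.
Proof. intros; pose proof (COS_bound y); nra. Qed.

(** [R(theta)^-1 d/dt] of the unbarred position and momentum, for barred data [x, X] with
    [theta]-derivatives [d, D]; [om] is [theta'] and [rddot] is [r'']. *)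
Definition frame_vel (sg r rdot : R) (x d : vec2) : vec2 :=
  vadd (vscal (rdot / sg) x) (vscal (sg / r) (vadd d (Jmul x))).
Definition frame_acc (sg r rdot rddot om : R) (x X d D : vec2) : vec2 :=
  vadd (vadd (vscal (- (sg * rdot / r ^ 2)) X) (vscal (sg * om / r) (vadd D (Jmul X))))
       (vadd (vscal (rddot / sg) x) (vscal (rdot * om / sg) (vadd d (Jmul x)))).

Lemma frame_vel_inj sg r rdot x d d' : sg / r <> 0 ->
  frame_vel sg r rdot x d = frame_vel sg r rdot x d' -> d = d'.
Proof.
  intros Hk E; pose proof (f_equal fst E); pose proof (f_equal snd E).
  unfold frame_vel, vadd, vscal, Jmul in *; simpl in *.
  apply vec_eq; apply (Rmult_eq_reg_l (sg / r)); auto; lra.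
Qed.

Lemma frame_acc_inj sg r rdot rddot om x X d D D' : sg * om / r <> 0 ->
  frame_acc sg r rdot rddot om x X d D = frame_acc sg r rdot rddot om x X d D' -> D = D'.
Proof.
  intros Hk E; pose proof (f_equal fst E); pose proof (f_equal snd E).
  unfold frame_acc, vadd, vscal, Jmul in *; simpl in *.
  apply vec_eq; apply (Rmult_eq_reg_l (sg * om / r)); auto; lra.
Qed.

(** [kappa = 1] gives the Kepler problem and [kappa = 1 + beta] Euler's collinear problem. *)
Definition barred_ham (kappa e th : R) : vec2 -> vec2 -> R :=
  quadH ((e * cos th - 2 * kappa) / (1 + e * cos th)) ((e * cos th + kappa) / (1 + e * cos th)).

Section Barred.

Variables (p e sg mu : R) (th rdot : R -> R).
Hypotheses (p_pos : 0 < p) (e_range : 0 <= e < 1) (sg_pos : 0 < sg) (mu_eq : mu = sg ^ 4 / p)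
  (th_deriv : forall t, derivable_pt_lim th t (sg ^ 2 / rtheta p e (th t) ^ 2))
  (r_deriv : forall t, derivable_pt_lim (fun s => rtheta p e (th s)) t (rdot t)).

Lemma rtheta_pos y : 0 < rtheta p e y.
Proof. apply Rdiv_lt_0_compat; [exact p_pos | now apply one_plus_ecos_pos]. Qed.

Lemma rdot_eq t : rdot t = e * sg ^ 2 / p * sin (th t).
Proof.
  pose proof (one_plus_ecos_pos e (th t) e_range).
  eapply uniqueness_limite; [apply r_deriv|]; unfold rtheta.
  eapply deriv_ext; [intros; unfold Rdiv at 1; reflexivity|].
  eapply deriv_eq.
  - apply deriv_scal, deriv_inv; [|lra].
    apply deriv_plus; [apply derivable_pt_lim_const | apply deriv_scal, deriv_cos, th_deriv].
  - unfold rtheta; field; split; lra.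
Qed.

Lemma rdot_deriv t :
  derivable_pt_lim rdot t (e * sg ^ 2 / p * (cos (th t) * (sg ^ 2 / rtheta p e (th t) ^ 2))).
Proof. eapply deriv_ext; [intros; symmetry; apply rdot_eq|]; apply deriv_scal, deriv_sin, th_deriv. Qed.

Lemma angular_velocity_ge t : sg ^ 2 * (1 - e) ^ 2 / p ^ 2 <= sg ^ 2 / rtheta p e (th t) ^ 2.
Proof.
  pose proof (COS_bound (th t)); pose proof (one_plus_ecos_pos e (th t) e_range).
  unfold rtheta; replace (sg ^ 2 / (p / (1 + e * cos (th t))) ^ 2)
    with (sg ^ 2 * (1 + e * cos (th t)) ^ 2 / p ^ 2) by (field; lra).
  unfold Rdiv; apply Rmult_le_compat_r; [left; apply Rinv_0_lt_compat, pow_lt; lra|].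
  apply Rmult_le_compat_l; [left; apply pow_lt; lra|].
  assert (1 - e <= 1 + e * cos (th t)) by nra; simpl; nra.
Qed.

Lemma unbar_pos_vderiv (x : R -> vec2) t d : has_vderiv x (th t) d ->
  has_vderiv (unbar_pos sg p e th x) t
    (rot (th t) (frame_vel sg (rtheta p e (th t)) (rdot t) (x (th t)) d)).
Proof.
  intros Hd; pose proof (rtheta_pos (th t)); unfold unbar_pos; eapply vderiv_eq.
  - apply (vderiv_scal (fun s => rtheta p e (th s) / sg) (fun s => rot (th s) (x (th s)))).
    + apply derivable_pt_lim_div_scal, r_deriv.
    + apply vderiv_rot; [apply th_deriv | apply vderiv_comp; [apply th_deriv | exact Hd]].
  - unfold frame_vel; vec_components; field; lra.
Qed.

Lemma unbar_mom_vderiv (x X : R -> vec2) t d D :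
  has_vderiv x (th t) d -> has_vderiv X (th t) D ->
  has_vderiv (unbar_mom sg p e th rdot x X) t
    (rot (th t) (frame_acc sg (rtheta p e (th t)) (rdot t)
                   (e * sg ^ 2 / p * (cos (th t) * (sg ^ 2 / rtheta p e (th t) ^ 2)))
                   (sg ^ 2 / rtheta p e (th t) ^ 2) (x (th t)) (X (th t)) d D)).
Proof.
  intros Hd HD; pose proof (rtheta_pos (th t)); unfold unbar_mom; eapply vderiv_eq.
  - apply vderiv_rot; [apply th_deriv | apply vderiv_add].
    + apply (vderiv_scal (fun s => sg / rtheta p e (th s)) (fun s => X (th s))).
      * eapply deriv_ext; [intros; unfold Rdiv at 1; reflexivity|].
        apply deriv_scal, deriv_inv; [apply r_deriv | lra].
      * apply vderiv_comp; [apply th_deriv | exact HD].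
    + apply (vderiv_scal (fun s => rdot s / sg) (fun s => x (th s))).
      * apply derivable_pt_lim_div_scal, rdot_deriv.
      * apply vderiv_comp; [apply th_deriv | exact Hd].
  - unfold frame_acc; vec_components; field; lra.
Qed.

Lemma frame_vel_quadH (x X : R -> vec2) t :
  rot (th t) (frame_vel sg (rtheta p e (th t)) (rdot t) (x (th t))
                (quadH_vel (x (th t)) (X (th t))))
  = unbar_mom sg p e th rdot x X t.
Proof.
  pose proof (rtheta_pos (th t)); unfold unbar_mom, frame_vel, quadH_vel.
  vec_components; field; lra.
Qed.

Lemma frame_acc_quadH kappa (x X : R -> vec2) t :
  rot (th t) (frame_acc sg (rtheta p e (th t)) (rdot t)
                (e * sg ^ 2 / p * (cos (th t) * (sg ^ 2 / rtheta p e (th t) ^ 2)))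
                (sg ^ 2 / rtheta p e (th t) ^ 2) (x (th t)) (X (th t))
                (quadH_vel (x (th t)) (X (th t)))
                (quadH_force ((e * cos (th t) - 2 * kappa) / (1 + e * cos (th t)))
                             ((e * cos (th t) + kappa) / (1 + e * cos (th t)))
                             (x (th t)) (X (th t))))
  = vscal (- kappa * mu / rtheta p e (th t) ^ 3) (tidal (radial (th t)) (unbar_pos sg p e th x t)).
Proof.
  pose proof (one_plus_ecos_pos e (th t) e_range).
  unfold unbar_pos; rewrite tidal_scal, tidal_radial_rot, <- !rot_scal; f_equal.
  rewrite rdot_eq, mu_eq; unfold frame_acc, quadH_vel, quadH_force, rtheta.
  vec_components; field; repeat split; lra.
Qed.

Lemma barred_vderiv_of_unbarred (x X : R -> vec2) :
  (forall t, has_vderiv (unbar_pos sg p e th x) t (unbar_mom sg p e th rdot x X t) /\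
             exists D, has_vderiv (unbar_mom sg p e th rdot x X) t D) ->
  forall y, exists t, th t = y /\ exists d D, has_vderiv x (th t) d /\ has_vderiv X (th t) D.
Proof.
  intros Hu y.
  assert (Hc0 : 0 < sg ^ 2 * (1 - e) ^ 2 / p ^ 2)
    by (apply Rdiv_lt_0_compat; [apply Rmult_lt_0_compat|]; apply pow_lt; lra).
  destruct (deriv_ge_inverse th _ _ Hc0 th_deriv angular_velocity_ge) as (g & Hg & Hgd).
  (* undoing [unbar_pos] and [unbar_mom] writes [x o th] and [X o th] in differentiable terms *)
  set (xt := fun s => vscal (sg / rtheta p e (th s)) (rot (- th s) (unbar_pos sg p e th x s))).
  assert (Hxt : forall s, xt s = x (th s)).
  { intro s; pose proof (rtheta_pos (th s)); unfold xt, unbar_pos.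
    rewrite rot_scal, rot_opp_rot; vec_components; field; lra. }
  set (Xt := fun s => vscal (rtheta p e (th s) / sg)
                        (vsub (rot (- th s) (unbar_mom sg p e th rdot x X s))
                              (vscal (rdot s / sg) (xt s)))).
  assert (HXt : forall s, Xt s = X (th s)).
  { intro s; pose proof (rtheta_pos (th s)); unfold Xt, unbar_mom.
    rewrite rot_opp_rot, Hxt; vec_components; field; lra. }
  assert (Dxt : forall s, exists d, has_vderiv xt s d).
  { intro s; destruct (Hu s) as [Hpos _]; eexists; unfold xt; apply vderiv_scal.
    - eapply deriv_ext; [intros; unfold Rdiv at 1; reflexivity|].
      apply deriv_scal, (deriv_inv (fun s => rtheta p e (th s))); [apply r_deriv|].
      pose proof (rtheta_pos (th s)); lra.
    - apply vderiv_rot; [apply deriv_opp, th_deriv | exact Hpos]. }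
  assert (DXt : forall s, exists D, has_vderiv Xt s D).
  { intro s; destruct (Hu s) as [_ [D HD]]; destruct (Dxt s) as [d Hd].
    eexists; unfold Xt; apply vderiv_scal; [apply derivable_pt_lim_div_scal, r_deriv|].
    apply vderiv_sub; [apply vderiv_rot; [apply deriv_opp, th_deriv | exact HD]|].
    apply vderiv_scal; [apply derivable_pt_lim_div_scal, rdot_deriv | exact Hd]. }
  exists (g y); split; [apply Hg|]; rewrite Hg.
  destruct (Dxt (g y)) as [d Hd]; destruct (DXt (g y)) as [D HD].
  exists (vscal (/ (sg ^ 2 / rtheta p e (th (g y)) ^ 2)) d),
         (vscal (/ (sg ^ 2 / rtheta p e (th (g y)) ^ 2)) D).
  split; apply (vderiv_through_inverse th g); auto;
    [apply (vderiv_ext xt) | apply (vderiv_ext Xt)]; auto.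
Qed.

Lemma unbarred_iff_barred nu (x X : R -> vec2) :
  tidal_ode nu (fun t => rtheta p e (th t)) th (unbar_pos sg p e th x) (unbar_mom sg p e th rdot x X)
  <-> HamSys (barred_ham (- nu / mu) e) x X.
Proof.
  set (kappa := - nu / mu).
  assert (Hnu : nu = - kappa * mu)
    by (unfold kappa; field; rewrite mu_eq;
        apply Rgt_not_eq, Rdiv_lt_0_compat; [apply pow_lt |]; assumption).
  unfold tidal_ode, barred_ham; rewrite HamSys_quadH, Hnu; split.
  - intros Hu y.
    destruct (barred_vderiv_of_unbarred x X ltac:(intro t; split; [|eexists]; apply Hu) y)
      as (t & <- & d & D & Hd & HD).
    destruct (Hu t) as [Hpos Hmom]; pose proof (rtheta_pos (th t)).
    assert (Ed : d = quadH_vel (x (th t)) (X (th t))).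
    { apply (frame_vel_inj sg (rtheta p e (th t)) (rdot t) (x (th t))).
      - apply Rgt_not_eq, Rdiv_lt_0_compat; lra.
      - apply (rot_inj (th t)); rewrite frame_vel_quadH.
        exact (vderiv_unique _ _ _ _ (unbar_pos_vderiv x t d Hd) Hpos). }
    subst d; split; [exact Hd|].
    eapply vderiv_eq; [exact HD|].
    eapply frame_acc_inj; [|apply (rot_inj (th t)); rewrite frame_acc_quadH;
                            exact (vderiv_unique _ _ _ _ (unbar_mom_vderiv x X t _ _ Hd HD) Hmom)].
    apply Rgt_not_eq, Rdiv_lt_0_compat; [apply Rmult_lt_0_compat|]; auto.
    apply Rdiv_lt_0_compat; [apply pow_lt|apply pow_lt]; lra.
  - intros Hb t; destruct (Hb (th t)) as [Hd HD]; split.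
    + rewrite <- (frame_vel_quadH x X t); now apply unbar_pos_vderiv.
    + rewrite <- (frame_acc_quadH kappa x X t); now apply unbar_mom_vderiv.
Qed.

End Barred.

Lemma increasing_lt n (a : nat -> R) : (forall i, (1 <= i < n)%nat -> a i < a (S i)) ->
  forall i j, (1 <= i)%nat -> (i < j <= n)%nat -> a i < a j.
Proof.
  intros H i j Hi Hij; induction j as [|j IHj]; [lia|].
  destruct (Nat.eq_dec i j) as [->|]; [apply H; lia|].
  apply Rlt_trans with (a j); [apply IHj; lia | apply H; lia].
Qed.

Lemma increasing_injective n (a : nat -> R) : (forall i, (1 <= i < n)%nat -> a i < a (S i)) ->
  forall i j, (1 <= i <= n)%nat -> (1 <= j <= n)%nat -> j <> i -> a j <> a i.
Proof.
  intros Ha i j Hi Hj Hji; destruct (Nat.lt_ge_cases j i).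
  - pose proof (increasing_lt n a Ha j i ltac:(lia) ltac:(lia)); lra.
  - pose proof (increasing_lt n a Ha i j ltac:(lia) ltac:(lia)); lra.
Qed.

Lemma mu_pos n (m a : nat -> R) : (2 <= n)%nat ->
  (forall i, (1 <= i <= n)%nat -> 0 < m i) ->
  (forall i, (1 <= i < n)%nat -> a i < a (S i)) -> 0 < mu n m a.
Proof.
  intros Hn Hm Ha.
  assert (Hterm : forall i j, (1 <= i)%nat -> (i < j <= n)%nat -> 0 < m i * m j / Rabs (a i - a j)).
  { intros i j Hi Hij; apply Rdiv_lt_0_compat; [apply Rmult_lt_0_compat; apply Hm; lia|].
    apply Rabs_pos_lt; pose proof (increasing_lt n a Ha i j Hi Hij); lra. }
  unfold mu; rewrite rsum_first, (rsum_first 2) by lia.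
  pose proof (Hterm 1%nat 2%nat ltac:(lia) ltac:(lia)).
  assert (0 <= rsum 3 n (fun j => m 1%nat * m j / Rabs (a 1%nat - a j)))
    by (apply rsum_nonneg; intros; apply Rlt_le, Hterm; lia).
  assert (0 <= rsum 2 n (fun i => rsum (S i) n (fun j => m i * m j / Rabs (a i - a j))))
    by (apply rsum_nonneg; intros; apply rsum_nonneg; intros; apply Rlt_le, Hterm; lia).
  lra.
Qed.

Lemma sigmaK_pow4 n m a p : 0 <= mu n m a * p -> sigmaK n m a p ^ 4 = mu n m a * p.
Proof.
  intros H; unfold sigmaK.
  replace (sqrt (sqrt (mu n m a * p)) ^ 4)
    with (sqrt (sqrt (mu n m a * p)) * sqrt (sqrt (mu n m a * p))
          * (sqrt (sqrt (mu n m a * p)) * sqrt (sqrt (mu n m a * p)))) by ring.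
  rewrite sqrt_sqrt by apply sqrt_pos; now apply sqrt_sqrt.
Qed.

Definition ansatz_modes (z : R -> vec2) (w : nat -> R -> vec2) (k : nat) : R -> vec2 :=
  if Nat.eqb k 2 then z else w (k - 2)%nat.

Lemma pert_q_modal n a b z w i t : (2 <= n)%nat ->
  pert_q n a b z w i t = modal_sum n a b (fun k => ansatz_modes z w k t) i.
Proof.
  intros Hn; unfold pert_q, modal_sum; rewrite (vsum_first 2 n) by lia.
  f_equal; apply vsum_ext; intros k Hk; unfold ansatz_modes.
  rewrite vvec_ge3 by lia; destruct (Nat.eqb_spec k 2); [lia | reflexivity].
Qed.

Lemma pert_p_modal n m a b Z W i t : (2 <= n)%nat ->
  pert_p n m a b Z W i t = vscal (m i) (modal_sum n a b (fun k => ansatz_modes Z W k t) i).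
Proof. intros Hn; unfold pert_p; f_equal; apply (pert_q_modal n a b Z W i t Hn). Qed.

Lemma forall_ansatz_modes (P : nat -> (R -> vec2) -> (R -> vec2) -> Prop) n z w Z W :
  (2 <= n)%nat ->
  (forall k, (2 <= k <= n)%nat -> P k (ansatz_modes z w k) (ansatz_modes Z W k)) <->
  (P 2%nat z Z /\ forall l, (1 <= l <= n - 2)%nat -> P (l + 2)%nat (w l) (W l)).
Proof.
  intros Hn; split.
  - intros H; split; [apply (H 2%nat); lia|].
    intros l Hl; pose proof (H (l + 2)%nat ltac:(lia)) as Hl2; unfold ansatz_modes in Hl2.
    destruct (Nat.eqb_spec (l + 2) 2); [lia|]; now rewrite Nat.add_sub in Hl2.
  - intros [H2 Hl] k Hk; unfold ansatz_modes; destruct (Nat.eqb_spec k 2) as [->|Hk2]; [exact H2|].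
    replace k with ((k - 2) + 2)%nat at 1 by lia; apply Hl; lia.
Qed.

Lemma LinNBody_EMsol_modes n m a b lam p e theta z w Z W :
  (2 <= n)%nat -> (forall i, (1 <= i <= n)%nat -> 0 < m i) ->
  (forall i, (1 <= i < n)%nat -> a i < a (S i)) ->
  (forall i, (1 <= i <= n)%nat ->
     rsum 1 n (fun j => if Nat.eqb j i then 0 else m j * (a j - a i) / Rabs (a j - a i) ^ 3)
     = - mu n m a * a i) ->
  (forall k i, (3 <= k <= n)%nat -> (1 <= i <= n)%nat ->
     rsum 1 n (fun j => Dmat n m a i j * b j k) = lam k * b i k) ->
  (forall k l, (1 <= k <= n)%nat -> (1 <= l <= n)%nat ->
     rsum 1 n (fun i => vvec a b k i * m i * vvec a b l i) = if Nat.eqb k l then 1 else 0) ->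
  0 < p -> 0 <= e < 1 ->
  LinNBody n m (EMsol a p e theta) (pert_q n a b z w) (pert_p n m a b Z W) <->
  forall k, (2 <= k <= n)%nat ->
    tidal_ode (mode_eig n m a lam k) (fun t => rtheta p e (theta t)) theta
      (ansatz_modes z w k) (ansatz_modes Z W k).
Proof.
  intros Hn Hm Ha Hcentral Heigen Horth Hp He.
  replace (pert_q n a b z w) with (fun i t => modal_sum n a b (fun k => ansatz_modes z w k t) i)
    by (do 2 (apply functional_extensionality; intro); symmetry; now apply pert_q_modal).
  replace (pert_p n m a b Z W)
    with (fun i t => vscal (m i) (modal_sum n a b (fun k => ansatz_modes Z W k t) i))
    by (do 2 (apply functional_extensionality; intro); symmetry; now apply pert_p_modal).
  apply LinNBody_modal; auto.
  - exact (increasing_injective n a Ha).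
  - intro; now apply rtheta_pos.
Qed.

Lemma H_kepler_barred n m a lam e th y Y : 0 <= e < 1 -> 0 < mu n m a ->
  H_kepler e th y Y = barred_ham (- mode_eig n m a lam 2 / mu n m a) e th y Y.
Proof.
  intros He Hmu; pose proof (one_plus_ecos_pos e th He).
  unfold H_kepler, barred_ham, mode_eig; simpl; f_equal; field; lra.
Qed.

Lemma H_euler_barred n m a lam l e th y Y : (1 <= l)%nat -> 0 <= e < 1 -> 0 < mu n m a ->
  H_euler (- lam (l + 2)%nat / mu n m a) e th y Y
  = barred_ham (- mode_eig n m a lam (l + 2) / mu n m a) e th y Y.
Proof.
  intros Hl He Hmu; pose proof (one_plus_ecos_pos e th He).
  unfold H_euler, barred_ham, mode_eig; destruct (Nat.eqb_spec (l + 2) 2); [lia|].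
  f_equal; field; lra.
Qed.

Theorem theorem1p2
  (n : nat) (m a : nat -> R) (b : nat -> nat -> R) (lam : nat -> R)
  (p e : R) (theta rdot : R -> R)
  (zb Zb : R -> vec2) (wb Wb : nat -> R -> vec2) :
  (3 <= n)%nat ->
  (* masses *)
  (forall i, (1 <= i <= n)%nat -> 0 < m i) ->
  rsum 1 n m = 1 ->
  (* collinear central configuration, normalized *)
  (forall i, (1 <= i < n)%nat -> a i < a (S i)) ->
  rsum 1 n (fun i => m i * a i) = 0 ->
  rsum 1 n (fun i => m i * a i ^ 2) = 1 ->
  (forall i, (1 <= i <= n)%nat ->
     rsum 1 n (fun j => if Nat.eqb j i then 0
                        else m j * (a j - a i) / Rabs (a j - a i) ^ 3)
     = - mu n m a * a i) ->
  (* eigenvectors v_k of D for lambda_k, 3 <= k <= n, ordered decreasingly *)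
  (forall k i, (3 <= k <= n)%nat -> (1 <= i <= n)%nat ->
     rsum 1 n (fun j => Dmat n m a i j * b j k) = lam k * b i k) ->
  (forall k, (3 <= k < n)%nat -> lam (S k) <= lam k) ->
  (* v_i^T M v_j = delta_ij, with v_1 = (1,..,1), v_2 = (a_1x,..,a_nx) *)
  (forall k l, (1 <= k <= n)%nat -> (1 <= l <= n)%nat ->
     rsum 1 n (fun i => vvec a b k i * m i * vvec a b l i)
     = if Nat.eqb k l then 1 else 0) ->
  (* Kepler ellipse r = p/(1+e cos theta), r^2 theta' = sigma^2 *)
  0 < p -> 0 <= e < 1 ->
  (forall t, derivable_pt_lim theta t
       (sigmaK n m a p ^ 2 / rtheta p e (theta t) ^ 2)) ->
  (forall t, derivable_pt_lim (fun s => rtheta p e (theta s)) t (rdot t)) ->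
  let sg := sigmaK n m a p in
  let z := unbar_pos sg p e theta zb in
  let Z := unbar_mom sg p e theta rdot zb Zb in
  let w := fun l => unbar_pos sg p e theta (wb l) in
  let W := fun l => unbar_mom sg p e theta rdot (wb l) (Wb l) in
  (LinNBody n m (EMsol a p e theta) (pert_q n a b z w) (pert_p n m a b Z W)
   <->
   (HamSys (H_kepler e) zb Zb /\
    forall l, (1 <= l <= n - 2)%nat ->
      HamSys (H_euler (- lam (l + 2)%nat / mu n m a) e) (wb l) (Wb l))).
Proof.
  intros Hn Hm _ Ha _ _ Hcentral Heigen _ Horth Hp He Hth Hr sg z Z w W.
  pose proof (mu_pos n m a ltac:(lia) Hm Ha) as Hmu.
  assert (Hsg : 0 < sg) by (apply sqrt_lt_R0, sqrt_lt_R0, Rmult_lt_0_compat; auto).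
  assert (Hmu_sg : mu n m a = sg ^ 4 / p)
    by (unfold sg; rewrite sigmaK_pow4 by nra; field; lra).
  rewrite (LinNBody_EMsol_modes n m a b lam p e theta) by (auto; lia).
  rewrite (forall_ansatz_modes (fun k => tidal_ode (mode_eig n m a lam k)
                                         (fun t => rtheta p e (theta t)) theta)) by lia.
  unfold z, Z, w, W; cbv beta.
  assert (Hmode : forall k x X, tidal_ode (mode_eig n m a lam k) (fun t => rtheta p e (theta t)) theta
                    (unbar_pos sg p e theta x) (unbar_mom sg p e theta rdot x X)
                  <-> HamSys (barred_ham (- mode_eig n m a lam k / mu n m a) e) x X)
    by (intros; now apply unbarred_iff_barred).
  rewrite Hmode, (HamSys_ext _ (H_kepler e))
    by (intros; symmetry; now apply H_kepler_barred).
  split; intros [HK HE]; split; auto; intros l Hl; specialize (HE l Hl).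
  - rewrite Hmode, (HamSys_ext _ (H_euler (- lam (l + 2)%nat / mu n m a) e)) in HE
      by (intros; symmetry; apply H_euler_barred; auto; lia); exact HE.
  - rewrite Hmode, (HamSys_ext _ (H_euler (- lam (l + 2)%nat / mu n m a) e))
      by (intros; symmetry; apply H_euler_barred; auto; lia); exact HE.
Qed.
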